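(* Let $p$ be a prime. Let $M$ be a matroid over $\mathbb{Z}/p\mathbb{Z}$ and $N$ a sparse paving matroid over $\mathbb{Z}/p\mathbb{Z}$, both of the same rank $n$, such that either (1) $E(M)$ is not a progression and $|E(M)|=|E(N)|-1$, or (2) $E(M)$ is neither a progression nor a semi-progression and $|E(M)|=|E(N)|$. If $0\notin E(N)$, then $M$ is matched to $N$.
   Context: A matroid over an abelian group $G$ is a matroid $M$ whose finite ground set $E(M)$ is a subset of $G$; all matroids are assumed loopless. A matroid of rank $n$ is paving if every $(n-1)$-element subset of its ground set is independent; it is sparse paving if both it and its dual matroid are paving. A progression of length $k$ with difference $x$ and initial term $a$ is a set $\{a,a+x,\dots,a+(k-1)x\}$; a set $A$ is a semi-progression if $A\setminus\{a\}$ is a progression for some $a\in A$. For matroids $M,N$ over $G$ with $r(M)=r(N)=n>0$ and bases $\mathcal{M}=\{a_1,\dots,a_n\}$ of $M$ and $\mathcal{N}=\{b_1,\dots,b_n\}$ of $N$, $\mathcal{M}$ is matched to $\mathcal{N}$ if there is a permutation $\pi\in S_n$ with $a_i+b_{\pi(i)}\notin E(M)$ for all $i$. $M$ is matched to $N$ if for every basis $\mathcal{M}$ of $M$ there exists a basis $\mathcal{N}$ of $N$ such that $\mathcal{M}$ is matched to $\mathcal{N}$. *)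

From HB Require Import structures.
From mathcomp Require Import all_boot all_order all_algebra.
Set Implicit Arguments. Unset Strict Implicit. Unset Printing Implicit Defensive.
Import GRing.Theory.
Local Open Scope ring_scope.

Section Matroids.
Variable T : finType.

Definition is_matroid (E : {set T}) (B : {set {set T}}) : Prop :=
  [/\ B != set0,
      (forall X : {set T}, X \in B -> X \subset E) &
      (forall B1 B2, B1 \in B -> B2 \in B -> forall x, x \in B1 :\: B2 ->
         exists2 y, y \in B2 :\: B1 & y |: (B1 :\ x) \in B)].

Definition indep (B : {set {set T}}) (X : {set T}) : bool :=
  [exists Y in B, X \subset Y].

Definition loopless (E : {set T}) (B : {set {set T}}) : Prop :=
  forall x, x \in E -> indep B [set x].

Definition has_rank (B : {set {set T}}) (n : nat) : Prop :=
  forall X : {set T}, X \in B -> (#|X| = n)%N.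

Definition dual_bases (E : {set T}) (B : {set {set T}}) : {set {set T}} :=
  [set E :\: X | X in B].

Definition paving (E : {set T}) (B : {set {set T}}) (n : nat) : Prop :=
  forall X : {set T}, X \subset E -> (#|X| = n.-1)%N -> indep B X.

Definition sparse_paving (E : {set T}) (B : {set {set T}}) (n : nat) : Prop :=
  paving E B n /\ paving E (dual_bases E B) (#|E| - n)%N.

End Matroids.


Section Additive.
Variable T : finZmodType.

Definition progression (A : {set T}) : Prop :=
  exists (a x : T) (k : nat), A = [set a + x *+ (nat_of_ord i) | i : 'I_k].

Definition semi_progression (A : {set T}) : Prop :=
  exists2 a, a \in A & progression (A :\ a).

Definition matched_bases (EM : {set T}) (A C : {set T}) : Prop :=
  exists f : T -> T, [/\ {in A &, injective f}, f @: A = C &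
                         forall a, a \in A -> a + f a \notin EM].

Definition matched (EM : {set T}) (BM : {set {set T}})
                   (EN : {set T}) (BN : {set {set T}}) : Prop :=
  forall A, A \in BM -> exists2 C, C \in BN & matched_bases EM A C.

End Additive.

From mathcomp Require Import all_boot all_algebra fingroup cyclic.
From mathcomp Require Import zify.
Set Implicit Arguments. Unset Strict Implicit. Unset Printing Implicit Defensive.
Import GRing.Theory FinRing.Theory.

(* A basis A of M is matched to N by Hall's theorem for the relation
   a + c \notin E(M).  For S a subset of A, the points of E(N) that are not
   neighbours of S are the translations c with S + c inside E(M); their set T
   contains 0, which is not in E(N), and Cauchy-Davenport gives
   |S| + |T| - 1 <= |E(M)| <= |E(N)|, which is Hall's condition.  If the matched
   set C is not a basis of N, then either some a + y is outside E(M) with y in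
   E(N) \ C, and since N is sparse paving, exchanging y into C gives a basis; or
   every neighbour of A lies in C, which forces A + T = E(M) with equality in
   Cauchy-Davenport, and then E(M) is a progression by Vosper's theorem. *)

Section Hall.
Variables (T : finType) (R : rel T).
Implicit Types (A S Y : {set T}) (f : T -> T).

Definition nbh Y S := [set c in Y | [exists a in S, R a c]].

Definition hall_cond Y A := forall S, S \subset A -> #|S| <= #|nbh Y S|.

Definition is_matching Y A f :=
  [/\ {in A &, injective f}, {in A, forall a, f a \in Y} & {in A, forall a, R a (f a)}].

Lemma nbh_sub Y S : nbh Y S \subset Y.
Proof. by apply/subsetP => c; rewrite inE => /andP []. Qed.

Lemma nbh_nbh Y S S' : S' \subset S -> nbh (nbh Y S) S' = nbh Y S'.
Proof.
move=> /subsetP sS'S; apply/setP => c; rewrite !inE.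
apply/idP/idP => [/andP [/andP [cY _] ex]|/andP [cY ex]]; first by rewrite cY ex.
rewrite cY ex andbT; case/existsP: ex => a /andP [aS' r].
by apply/existsP; exists a; rewrite sS'S.
Qed.

Lemma nbhU Y S S' : nbh Y (S :|: S') = nbh Y S :|: nbh Y S'.
Proof.
apply/setP => c; rewrite !inE -andb_orr; congr (_ && _).
apply/existsP/orP => [[a /andP [/setUP [] aS r]]|[] /existsP [a /andP [aS r]]].
- by left; apply/existsP; exists a; rewrite aS.
- by right; apply/existsP; exists a; rewrite aS.
- by exists a; rewrite inE aS.
- by exists a; rewrite inE aS orbT.
Qed.

Lemma nbhD Y Y' S : nbh (Y :\: Y') S = nbh Y S :\: Y'.
Proof. by apply/setP => c; rewrite !inE andbA. Qed.

Lemma is_matching0 Y f : is_matching Y set0 f.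
Proof. by split=> [a|a|a]; rewrite inE. Qed.

Lemma is_matching_glue Y1 Y2 A S f1 f2 :
  [disjoint Y1 & Y2] -> is_matching Y1 S f1 -> is_matching Y2 (A :\: S) f2 ->
  is_matching (Y1 :|: Y2) A (fun a => if a \in S then f1 a else f2 a).
Proof.
move=> dY [inj1 Y1f1 R1] [inj2 Y2f2 R2].
have inD a : a \in A -> a \notin S -> a \in A :\: S by rewrite inE => -> ->.
split=> [a b aA bA|a aA|a aA]; case: ifP => aS; try case: ifP => bS.
- exact: inj1.
- move=> fab; have := Y1f1 a aS; rewrite fab => /(disjointFr dY).
  by rewrite Y2f2 ?inD ?bS.
- move=> fab; have := Y1f1 b bS; rewrite -fab => /(disjointFr dY).
  by rewrite Y2f2 ?inD ?aS.
- by apply: inj2; rewrite inD ?aS ?bS.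
- by rewrite inE Y1f1.
- by rewrite inE Y2f2 ?orbT ?inD ?aS.
- exact: R1.
- by apply: R2; rewrite inD ?aS.
Qed.

Lemma is_matchingS Y Y' A f : Y \subset Y' -> is_matching Y A f -> is_matching Y' A f.
Proof. by move=> /subsetP sYY' [? Yf ?]; split=> // a /Yf /sYY'. Qed.

Lemma hall_cond_nbh Y A S : hall_cond Y A -> S \subset A -> hall_cond (nbh Y S) S.
Proof.
by move=> hY sSA S' sS'S; rewrite nbh_nbh //; apply/hY/(subset_trans sS'S).
Qed.

Lemma hall_cond_compl Y A S : hall_cond Y A -> S \subset A -> #|nbh Y S| <= #|S| ->
  hall_cond (Y :\: nbh Y S) (A :\: S).
Proof.
move=> hY sSA tight S' sS'; rewrite nbhD.
have dSS' : [disjoint S & S'].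
  by rewrite disjoint_sym disjoints_subset; apply: subset_trans sS' (subsetDr _ _).
have := hY (S :|: S'); rewrite subUset sSA (subset_trans sS' (subsetDl _ _)).
rewrite nbhU cardsU (disjoint_setI0 dSS') cards0 => /(_ isT).
have := cardsUI (nbh Y S) (nbh Y S'); have := cardsID (nbh Y S) (nbh Y S').
rewrite setIC; lia.
Qed.

Lemma hall_cond_del Y A a0 c0 :
  (forall S, S \proper A -> S != set0 -> #|S| < #|nbh Y S|) ->
  a0 \in A -> c0 \in Y -> hall_cond (Y :\ c0) (A :\ a0).
Proof.
move=> slack a0A c0Y S sS; have [->|nS] := eqVneq S set0; first by rewrite cards0.
have := slack S (sub_proper_trans sS (properD1 a0A)) nS; rewrite nbhD (cardsD1 c0 (nbh Y S)).
by case: (c0 \in nbh Y S); lia.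
Qed.

Lemma hall_marriage Y A : hall_cond Y A -> exists f, is_matching Y A f.
Proof.
move: {2}#|A| (leqnn #|A|) => n; elim: n A Y => [|n IH] A Y leAn hY.
  by exists id; move: leAn; rewrite leqn0 cards_eq0 => /eqP ->; apply: is_matching0.
have [S /and3P [pSA nS tight] | slack] :=
  pickP [pred S : {set T} | [&& S \proper A, S != set0 & #|nbh Y S| <= #|S|]].
  have sSA := proper_sub pSA.
  have [f1 m1] := IH S (nbh Y S) (leq_trans (proper_card pSA) leAn) (hall_cond_nbh hY sSA).
  have [f2 m2] : exists f2, is_matching (Y :\: nbh Y S) (A :\: S) f2.
    apply: IH (hall_cond_compl hY sSA tight).
    rewrite cardsDS //; move: nS; rewrite -card_gt0; lia.
  exists (fun a => if a \in S then f1 a else f2 a).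
  apply: (is_matchingS _ (is_matching_glue _ m1 m2)).
    by rewrite subUset nbh_sub subsetDl.
  by rewrite disjoint_sym disjoints_subset; apply: subsetDr.
have [->|[a0 a0A]] := set_0Vmem A; first by exists id; apply: is_matching0.
have slack' S : S \proper A -> S != set0 -> #|S| < #|nbh Y S|.
  by move=> pSA nS; have := slack S; rewrite /= pSA nS /= => /negbT; rewrite -ltnNge.
have [c0 c0N] : exists c0, c0 \in nbh Y [set a0].
  by apply/set0Pn; rewrite -card_gt0 (leq_trans _ (hY _ _)) ?cards1 ?sub1set.
have [c0Y Ra0c0] : c0 \in Y /\ R a0 c0.
  by move: c0N; rewrite inE => /andP [-> /existsP [a /andP [/set1P -> ->]]].
have [f m] : exists f, is_matching (Y :\ c0) (A :\ a0) f.
  by apply: IH (hall_cond_del slack' a0A c0Y); move: leAn; rewrite (cardsD1 a0) a0A.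
exists (fun a => if a \in [set a0] then c0 else f a).
apply: (is_matchingS _ (is_matching_glue (Y1 := [set c0]) (f1 := fun=> c0) _ _ m)).
- by rewrite subUset sub1set c0Y subsetDl.
- by rewrite disjoints1 setD11.
- by split=> [a b /set1P -> /set1P -> //|a _|a /set1P ->]; rewrite ?set11.
Qed.

Lemma is_matching_update Y A f a0 y :
  is_matching Y A f -> a0 \in A -> y \in Y :\: f @: A -> R a0 y ->
  exists2 g, is_matching Y A g & g @: A = y |: (f @: A :\ f a0).
Proof.
move=> [inj_f Yf Rf] a0A /setDP [yY yf].
have fA a : a \in A -> f a \in f @: A by move=> aA; apply: imset_f.
have yfa a : a \in A -> y != f a by move=> aA; apply: contraNneq yf => ->; apply: fA.
exists (fun a => if a == a0 then y else f a); first split.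
- move=> a b aA bA /=; case: eqP => [->|a0a]; case: eqP => [->|b0b] //.
  + by move/eqP; rewrite (negbTE (yfa b bA)).
  + by move/esym/eqP; rewrite (negbTE (yfa a aA)).
  + exact: inj_f.
- by move=> a aA /=; case: eqP => _; [apply: yY | apply: Yf].
- by move=> a aA /=; case: eqP => [->|_]; [| apply: Rf].
apply/setP => z; apply/imsetP/setU1P => [[a aA ->]|[->|]].
- case: eqP => [_|a0a]; [by left | right].
  by rewrite !inE fA // andbT; apply/eqP => /(inj_f _ _ aA a0A).
- by exists a0; rewrite ?eqxx.
rewrite !inE => /andP [zfa0 /imsetP [a aA za]]; exists a => //.
by case: eqP => // aa0; rewrite za aa0 eqxx in zfa0.
Qed.

End Hall.

Section SparsePaving.
Variables (T : finType) (E : {set T}) (B : {set {set T}}) (n : nat).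
Hypotheses (matB : is_matroid E B) (rkB : has_rank B n).

Lemma basis_of_card_ground (C : {set T}) : C \subset E -> #|C| = n -> (#|E| <= n)%N -> C \in B.
Proof.
case: matB => /set0Pn [Y YB] sBE _ CE cC leEn.
have eqE (Z : {set T}) : Z \subset E -> #|Z| = n -> Z = E.
  by move=> ZE cZ; apply/eqP; rewrite eqEcard ZE cZ leEn.
by rewrite (eqE C) // -(eqE Y) ?sBE ?rkB.
Qed.

Lemma basis_of_rank_le1 (C : {set T}) : loopless E B -> (n <= 1)%N -> C \subset E -> #|C| = n ->
  C \in B.
Proof.
case: matB => /set0Pn [Y YB] _ _ loopB len1 CE cC.
case: n len1 rkB cC YB => [|[|//]] _ rk cC.
  by rewrite (cards0_eq cC) => YB; rewrite -(cards0_eq (rk Y YB)).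
move=> _; have [c eC] := cards1P (introT eqP cC).
have /existsP [Z /andP [ZB cZ]] : indep B [set c].
  by apply: loopB; apply: (subsetP CE); rewrite eC set11.
suff -> : C = Z by [].
by apply/eqP; rewrite eqEcard eC cZ cards1 rk.
Qed.

Lemma dual_paving_sub_basis (D : {set T}) : paving E (dual_bases E B) (#|E| - n) ->
  D \subset E -> #|D| = n.+1 -> exists2 Y, Y \in B & Y \subset D.
Proof.
case: matB => _ sBE _ dpav DE cD.
have cED : #|E :\: D| = (#|E| - n).-1 by rewrite cardsD (setIidPr DE) cD subnS.
have /existsP [_ /andP [/imsetP [Y YB ->] sub]] := dpav _ (subsetDl E D) cED.
exists Y => //; apply/subsetP => y yY; apply/negPn/negP => yD.
have yED : y \in E :\: D by rewrite inE yD (subsetP (sBE Y YB)).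
by have := subsetP sub y yED; rewrite inE yY.
Qed.

Lemma paving_extend (I : {set T}) : paving E B n -> (0 < n)%N ->
  I \subset E -> #|I| = n.-1 -> exists2 w, w \notin I & w |: I \in B.
Proof.
move=> pav n_gt0 IE cI; have /existsP [Z /andP [ZB IZ]] := pav I IE cI.
have [w wZ wI] : exists2 w, w \in Z & w \notin I.
  by apply/subsetPn; apply: contraTN n_gt0 => /subset_leq_card; rewrite (rkB ZB) cI; lia.
exists w => //; suff -> : w |: I = Z by [].
by apply/eqP; rewrite eqEcard subUset sub1set wZ IZ cardsU1 wI (rkB ZB) cI; lia.
Qed.

Lemma sparse_paving_exchange (C : {set T}) u v : sparse_paving E B n ->
  C \subset E -> #|C| = n -> u \in C -> v \in E :\: C -> C \notin B ->
  v |: (C :\ u) \in B.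
Proof.
case: matB => _ sBE exchB [pav dpav] CE cC uC /setDP [vE vC] CnB.
set I := C :\ u; apply: contraNT CnB => C'nB.
have eC : u |: I = C := setD1K uC.
have [Y YB YD] : exists2 Y, Y \in B & Y \subset v |: C.
  by apply: dual_paving_sub_basis; rewrite ?subUset ?sub1set ?vE ?CE ?cardsU1 ?vC ?cC.
have [w wI wIB] : exists2 w, w \notin I & w |: I \in B.
  apply: paving_extend; rewrite ?(subset_trans (subD1set C u)) //.
    by rewrite -cC card_gt0; apply/set0Pn; exists u.
  by rewrite -cC (cardsD1 u C) uC.
have [wu|wu] := eqVneq w u; first by rewrite -eC -wu.
have wv : w != v by apply: contraNneq C'nB => wv; rewrite -wv.
have wY : w \notin Y.
  apply: contra wI => /(subsetP YD); rewrite !inE (negbTE wv) (negbTE wu) /=.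
  by move=> ->.
have := exchB _ _ wIB YB w; rewrite setU1K // inE wY setU11.
case=> // y /setDP [yY ywI].
have := subsetP YD y yY; rewrite !inE; case/orP=> [/eqP -> C'B|yC]; first by rewrite C'B in C'nB.
have -> : y = u by apply/eqP; apply: contraNT ywI => yu; rewrite !inE yu yC orbT.
by rewrite eC.
Qed.

End SparsePaving.

Local Open Scope ring_scope.

Section Sumset.
Variable T : finZmodType.
Implicit Types (A B E S X Y : {set T}) (a b c e x : T).

Definition shift A e : {set T} := [set a + e | a in A].
Definition sumset A B : {set T} := [set a + b | a in A, b in B].
Definition transporter S E : {set T} := [set e | shift S e \subset E].
Definition sum_notin E : rel T := fun a c => a + c \notin E.

Lemma mem_shift A e x : (x \in shift A e) = (x - e \in A).
Proof.
apply/imsetP/idP => [[a aA ->]|xeA]; first by rewrite addrK.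
by exists (x - e); rewrite ?subrK.
Qed.

Lemma card_shift A e : #|shift A e| = #|A|.
Proof. exact/card_imset/addIr. Qed.

Lemma shift_shift A e e' : shift (shift A e) e' = shift A (e + e').
Proof. by apply/setP => x; rewrite !mem_shift addrAC -addrA -opprD. Qed.

Lemma shift_subsetN A B e : (B \subset shift A (- e)) = (shift B e \subset A).
Proof.
apply/subsetP/subsetP => sub x.
  by rewrite mem_shift => /sub; rewrite mem_shift opprK subrK.
by move=> xB; rewrite mem_shift opprK; apply: sub; rewrite mem_shift addrK.
Qed.

Lemma card_shiftI A e e' : #|shift A e :&: shift A e'| = #|A :&: shift A (e' - e)|.
Proof.
rewrite -(card_shift (A :&: shift A (e' - e)) e).
suff -> : shift A e :&: shift A e' = shift (A :&: shift A (e' - e)) e by [].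
by apply/setP => x; rewrite !inE !mem_shift inE mem_shift opprB addrA addrNK.
Qed.

Lemma mem_sumset A B a b : a \in A -> b \in B -> a + b \in sumset A B.
Proof. exact: imset2_f. Qed.

Lemma sumsetP A B x :
  reflect (exists a b, [/\ a \in A, b \in B & x = a + b]) (x \in sumset A B).
Proof.
by apply: (iffP imset2P) => [[a b aA bB ->]|[a [b [aA bB ->]]]]; [exists a, b | exists a b].
Qed.

Lemma sumset1 A b : sumset A [set b] = shift A b.
Proof.
apply/setP => x; rewrite mem_shift; apply/sumsetP/idP => [[a [_ [aA /set1P -> ->]]]|xbA].
  by rewrite addrK.
by exists (x - b), b; rewrite set11 subrK.
Qed.

Lemma sumsetC A B : sumset A B = sumset B A.
Proof.
by apply/setP => x; apply/sumsetP/sumsetP => -[a [b [aA bB ->]]]; exists b, a; rewrite addrC.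
Qed.

Lemma sumsetS A A' B B' : A \subset A' -> B \subset B' -> sumset A B \subset sumset A' B'.
Proof.
move=> /subsetP sA /subsetP sB; apply/subsetP => _ /sumsetP [a [b [aA bB ->]]].
by apply: mem_sumset; [apply: sA | apply: sB].
Qed.

Lemma sumset_shiftl A B e : sumset (shift A e) B = shift (sumset A B) e.
Proof.
apply/setP => z; rewrite mem_shift; apply/sumsetP/sumsetP => [[a [b [aA bB ->]]]|].
  by exists (a - e), b; rewrite -mem_shift addrAC.
move=> [a [b [aA bB ze]]]; exists (a + e), b.
by rewrite mem_shift addrK -(subrK e z) ze addrAC.
Qed.

Lemma shift_sub_sumset A B b : b \in B -> shift A b \subset sumset A B.
Proof. by move=> bB; rewrite -sumset1 sumsetS // sub1set. Qed.

Lemma leq_card_sumset A B b : b \in B -> (#|A| <= #|sumset A B|)%N.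
Proof. by move=> /(shift_sub_sumset A) /subset_leq_card; rewrite card_shift. Qed.

Lemma mem_transporter S E e : (e \in transporter S E) = (shift S e \subset E).
Proof. by rewrite inE. Qed.

Lemma sumset_transporter_sub S E : sumset S (transporter S E) \subset E.
Proof.
apply/subsetP => _ /sumsetP [a [e [aS /[!mem_transporter] /subsetP sE ->]]].
by apply: sE; rewrite mem_shift addrK.
Qed.

Lemma mem0_transporter S E : S \subset E -> 0 \in transporter S E.
Proof.
by move=> /subsetP SE; rewrite mem_transporter; apply/subsetP => a; rewrite mem_shift subr0 => /SE.
Qed.

Lemma nbh_sum_notin E Y S : nbh (sum_notin E) Y S = Y :\: transporter S E.
Proof.
apply/setP => c; rewrite !inE andbC; congr (_ && _).
apply/existsP/subsetPn => [[a /andP [aS acE]]|[x /[!mem_shift] xcS xE]].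
  by exists (a + c); rewrite ?mem_shift ?addrK.
by exists (x - c); rewrite xcS /sum_notin subrK.
Qed.

Lemma card_nbh_sum_notin E Y S : S \subset E -> 0 \notin Y ->
  (#|Y| + 1 <= #|nbh (sum_notin E) Y S| + #|transporter S E|)%N.
Proof.
move=> SE Y0; rewrite nbh_sum_notin cardsD.
have : (#|Y :&: transporter S E| < #|transporter S E|)%N.
  apply/proper_card/properP; split; first exact: subsetIr.
  by exists 0; rewrite ?mem0_transporter // inE (negbTE Y0).
by have := subset_leq_card (subsetIl Y (transporter S E)); lia.
Qed.

Lemma progression_shift Y e : progression Y -> progression (shift Y e).
Proof.
move=> [a [x [k ->]]]; exists (a + e), x, k; apply/setP => z; rewrite mem_shift.
apply/imsetP/imsetP => -[i _ zi]; exists i => //.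
  by rewrite -(subrK e z) zi addrAC.
by rewrite zi addrAC addrK.
Qed.

Lemma progression_card2 A : #|A| = 2 -> progression A.
Proof.
move=> /eqP /cards2P [a [b [ab ->]]]; exists a, (b - a), 2.
apply/eqP; rewrite eqEcard cards2 ab (leq_trans (leq_imset_card _ _)) ?card_ord // andbT.
apply/subsetP => z /set2P [->|->]; apply/imsetP; [exists ord0 | exists ord_max] => //=.
  by rewrite addr0.
by rewrite addrC subrK.
Qed.

Definition sidon B := forall t, t != 0 -> (#|B :&: shift B t| <= 1)%N.

Lemma sidon_card_le2 B : sidon B -> (#|sumset B B| <= #|B| + #|B| - 1)%N -> (#|B| <= 2)%N.
Proof.
move=> sidonB le_sum; rewrite leqNgt; apply/negP.
move=> /[dup] B_gt2 /card_gt2P [c0 [c1 [c2 [[c0B c1B c2B] [c01 c12 c20]]]]].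
have overlap c c' : c != c' -> (#|shift B c :&: shift B c'| <= 1)%N.
  by move=> cc'; rewrite card_shiftI sidonB // subr_eq0 eq_sym.
have sub : shift B c0 :|: shift B c1 :|: shift B c2 \subset sumset B B.
  by rewrite !subUset !shift_sub_sumset.
have le_I2 : (#|(shift B c0 :|: shift B c1) :&: shift B c2| <= 2)%N.
  rewrite setIUl (leq_trans (leq_card_setU _ _)) //.
  by have := overlap _ _ c20; have := overlap _ _ c12; rewrite ![shift B c2 :&: _]setIC; lia.
move: (subset_leq_card sub) (overlap _ _ c01) le_I2 le_sum B_gt2.
by rewrite cardsU (cardsU (shift B c0)) !card_shift; lia.
Qed.

Lemma progression_of_rigid_translate A B e0 : (2 <= #|B|)%N ->
  (#|sumset A B| <= #|A| + #|B| - 1)%N ->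
  (forall e, (2 <= #|B :&: shift A (- e)|)%N -> shift B e \subset A) ->
  transporter B A = [set e0] -> A = shift B e0 -> progression A.
Proof.
move=> B_ge2 le_sum fit eK eA.
have sidonB : sidon B.
  move=> t t0; rewrite leqNgt; apply: contra t0 => BBt_ge2.
  have : e0 - t \in transporter B A.
    by rewrite mem_transporter fit // eA shift_shift opprB addrC subrK.
  by rewrite eK inE -subr_eq0 addrAC subrr add0r oppr_eq0.
have cA : #|A| = #|B| by rewrite eA card_shift.
have le_BB : (#|sumset B B| <= #|B| + #|B| - 1)%N.
  by rewrite -(card_shift _ e0) -sumset_shiftl -eA -{1}cA.
have B_le2 := sidon_card_le2 sidonB le_BB.
by rewrite eA; apply/progression_shift/progression_card2; lia.
Qed.

(** [(A :|: shift B e, B :&: shift A (- e))] is Dyson's e-transform of [(A, B)]. *)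
Lemma sumset_etrans_sub A B e :
  sumset (A :|: shift B e) (B :&: shift A (- e)) \subset sumset A B.
Proof.
apply/subsetP => z /sumsetP [x [y [/setUP xAB /setIP [yB]]]].
rewrite mem_shift opprK => yeA ->; case: xAB => [xA|]; first exact: mem_sumset.
rewrite mem_shift => xeB; rewrite (_ : x + y = (y + e) + (x - e)) ?mem_sumset //.
by rewrite addrACA subrr addr0 addrC.
Qed.

Lemma card_etrans A B e :
  (#|A :|: shift B e| + #|B :&: shift A (- e)| = #|A| + #|B|)%N.
Proof.
rewrite -(card_shift B e) -(cardsUI A) -(card_shift (B :&: shift A (- e)) e).
suff -> : shift (B :&: shift A (- e)) e = A :&: shift B e by [].
by apply/setP => x; rewrite !inE !mem_shift inE mem_shift opprK subrK andbC.
Qed.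

Lemma matched_bases_of_matching E Y A f :
  is_matching (sum_notin E) Y A f -> matched_bases E A (f @: A).
Proof. by case=> inj_f _ Rf; exists f. Qed.

End Sumset.

Section PrimeOrder.
Variables (G : finZmodType) (G_pr : prime #|G|).
Local Notation p := #|G|.
Implicit Types (A B E S X Y : {set G}) (a b c e x y : G).

Lemma card_lt_order Y : (#|Y| < p)%N = (Y != setT).
Proof. by rewrite -properT properEcard subsetT cardsT. Qed.

Lemma order_prime x : x != 0 -> #[x]%g = p.
Proof.
move=> x0; apply: prime_nt_dvdP; rewrite ?order_eq1 //.
by rewrite -cardsT; apply: order_dvdG; rewrite inE.
Qed.

Lemma mulrn_onto x y : x != 0 -> exists2 k, (k < p)%N & x *+ k = y.
Proof.
move=> x0; have cycT : <[x]>%g = setT.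
  by apply/eqP; rewrite eqEcard subsetT cardsT -orderE (order_prime x0) /=.
have /cyclePmin [k] : y \in <[x]>%g by rewrite cycT inE.
by rewrite order_prime // => kp ->; exists k.
Qed.

Lemma mulrn_inj x (i j : nat) : x != 0 -> (i < p)%N -> (j < p)%N ->
  x *+ i = x *+ j -> i = j.
Proof.
move=> x0 ip jp /eqP; rewrite -!zmodXgE eq_expg_mod_order order_prime //.
by rewrite !modn_small // => /eqP.
Qed.

Lemma shift_iter_sub X x y k : shift X x \subset X -> y \in X -> y + x *+ k \in X.
Proof.
move=> /subsetP sX yX; elim: k => [|k IH]; first by rewrite mulr0n addr0.
by rewrite mulrSr addrA; apply: sX; rewrite mem_shift addrK.
Qed.

Lemma shift_invariant_setT X x : x != 0 -> shift X x \subset X -> X != set0 -> X = setT.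
Proof.
move=> x0 sX /set0Pn [y yX]; apply/setP => z; rewrite inE.
have [k _ kz] := mulrn_onto (z - y) x0.
by have := shift_iter_sub k sX yX; rewrite kz addrC subrK.
Qed.

Lemma exists_shift_nsub A B : A != setT -> A != set0 -> (1 < #|B|)%N ->
  exists a, exists2 c, a \in A /\ c \in B & ~~ (shift B (a - c) \subset A).
Proof.
move=> AT A0 /card_gt1P [c1 [c2 [c1B c2B c12]]].
case: (boolP [exists a in A, exists c in B, ~~ (shift B (a - c) \subset A)]).
  by case/existsP=> a /andP [aA /existsP [c /andP [cB nsub]]]; exists a, c.
move=> /existsPn all_sub; case/negP: AT; apply/eqP.
apply: (shift_invariant_setT (x := c2 - c1)) => //; first by rewrite subr_eq0 eq_sym.
apply/subsetP => y; rewrite mem_shift => yA.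
have := all_sub (y - (c2 - c1)); rewrite yA /= negb_exists => /forallP /(_ c1).
rewrite c1B /= negbK => /subsetP; apply; rewrite mem_shift.
by rewrite -addrA -opprD subrK opprB addrC subrK.
Qed.

Lemma cauchy_davenport A B : A != set0 -> B != set0 ->
  (minn p (#|A| + #|B| - 1) <= #|sumset A B|)%N.
Proof.
move: {2}#|B| (leqnn #|B|) => n; elim: n A B => [|n IH] A B leBn A0 B0.
  by move: B0; rewrite -card_gt0; lia.
have [b bB] := set0Pn _ B0.
have [B_le1|B_gt1] := leqP #|B| 1.
  by have := leq_card_sumset A bB; move: B0; rewrite -card_gt0; lia.
have [AT|AT] := eqVneq A setT.
  suff -> : sumset A B = setT by rewrite cardsT geq_minl.
  apply/setP => x; rewrite inE -(subrK b x); apply: mem_sumset bB.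
  by rewrite AT inE.
have [a [c [aA cB] nsub]] := exists_shift_nsub AT A0 B_gt1.
set e := a - c.
have cB' : c \in B :&: shift A (- e) by rewrite inE cB mem_shift opprK addrC subrK.
have ltB' : (#|B :&: shift A (- e)| < #|B|)%N.
  apply/proper_card/properP; split; first exact: subsetIl.
  move: nsub; rewrite -shift_subsetN => /subsetPn [d dB dnA]; exists d => //.
  by apply/setIP => -[_]; apply/negP: dnA.
have := IH (A :|: shift B e) (B :&: shift A (- e)) _ _ _; rewrite card_etrans.
move=> /(_ _ _ _)/leq_trans; apply; first by lia.
- by apply/set0Pn; exists a; rewrite inE aA.
- by apply/set0Pn; exists c.
exact/subset_leq_card/sumset_etrans_sub.
Qed.

Lemma cauchy_davenport_lt A B : A != set0 -> B != set0 -> (#|sumset A B| < p)%N ->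
  (#|A| + #|B| - 1 <= #|sumset A B|)%N.
Proof. by move=> A0 B0; have := cauchy_davenport A0 B0; lia. Qed.

Lemma card_transporter S E : S != set0 -> S \subset E -> (#|E| < p)%N ->
  (#|S| + #|transporter S E| - 1 <= #|E|)%N.
Proof.
move=> S0 SE ltEp; have le_sum := subset_leq_card (sumset_transporter_sub S E).
apply: (leq_trans _ le_sum); apply: cauchy_davenport_lt; rewrite ?(leq_ltn_trans le_sum) //.
by apply/set0Pn; exists 0; apply: mem0_transporter.
Qed.

Lemma card_progression_seg y x k : x != 0 -> (k <= p)%N ->
  #|[set y + x *+ (i : nat) | i : 'I_k]| = k.
Proof.
move=> x0 kp; rewrite card_imset ?card_ord // => i j /addrI /mulrn_inj eq_ij.
by apply/val_inj/eq_ij; rewrite // (leq_trans (ltn_ord _)).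
Qed.

Lemma progression_setU_shift X x : X != set0 -> x != 0 ->
  (#|X :|: shift X x| <= #|X|.+1)%N -> X :|: shift X x != setT ->
  progression (X :|: shift X x).
Proof.
move=> X0 x0 leU UT.
have [s sXx sX] : exists2 s, s \in shift X x & s \notin X.
  apply/subsetPn; apply: contra UT => sub.
  by rewrite (shift_invariant_setT x0 sub X0) setTU.
have eU : X :|: shift X x = s |: X.
  apply/eqP; rewrite eq_sym eqEcard cardsU1 sX leU andbT.
  by rewrite subUset sub1set inE sXx orbT subsetUl.
have Xx_closed z : z \in X -> z + x != s -> z + x \in X.
  move=> zX zxs; have : z + x \in s |: X by rewrite -eU inE mem_shift addrK zX orbT.
  by case/setU1P => // /eqP; rewrite (negbTE zxs).
set m := #|X|; rewrite eU; exists (s - x *+ m), x, m.+1.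
apply/eqP; rewrite eqEcard; apply/andP; split; last first.
  by rewrite cardsU1 sX; apply: leq_trans (leq_imset_card _ _) _; rewrite card_ord.
apply/subsetP => y /setU1P [->|yX].
  by apply/imsetP; exists ord_max; rewrite //= subrK.
have [k1 k1p k1_y] := mulrn_onto (s - y) x0.
have Pk1 : (0 < k1)%N && (y + x *+ k1 == s).
  rewrite k1_y addrC subrK eqxx andbT lt0n.
  apply: contraNneq sX => k1_0; move: k1_y; rewrite k1_0 mulr0n => /eqP.
  by rewrite eq_sym subr_eq0 => /eqP ->.
have ex_k : exists k, (0 < k)%N && (y + x *+ k == s) by exists k1.
have [k /andP [k_gt0 /eqP yks] k_min] := ex_minnP ex_k.
have kp : (k < p)%N := leq_ltn_trans (k_min k1 Pk1) k1p.
have yiX i : (i < k)%N -> y + x *+ i \in X.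
  elim: i => [|i IH] ik; first by rewrite addr0.
  rewrite mulrSr addrA Xx_closed ?IH 1?ltnW // -addrA -mulrSr.
  by apply: contraTneq ik => yis; rewrite -leqNgt k_min // yis eqxx.
have k_le_m : (k <= m)%N.
  rewrite -(card_progression_seg y x0 (ltnW kp)) subset_leq_card //.
  by apply/subsetP => _ /imsetP [i _ ->]; apply: yiX.
apply/imsetP; exists (Ordinal (leq_ltn_trans (leq_subr k m) (ltnSn m))) => //=.
have -> : x *+ m = x *+ k + x *+ (m - k) by rewrite -mulrnDr subnKC.
by rewrite -yks opprD addrA addrK subrK.
Qed.

Definition sweep B x j := iter j (fun Y => Y :|: shift Y x) B.

Lemma mem_sweep B x j z :
  reflect (exists b i, [/\ b \in B, (i <= j)%N & z = b + x *+ i]) (z \in sweep B x j).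
Proof.
elim: j z => [|j IH] z /=.
  apply: (iffP idP) => [zB|[b [i [bB]]]]; first by exists z, 0%N; rewrite addr0.
  by rewrite leqn0 => /eqP -> ->; rewrite addr0.
rewrite inE mem_shift; apply: (iffP orP) => [[/IH|/IH] [b [i [bB ij eq_z]]]|[b [i [bB]]]].
- by exists b, i; rewrite ltnW.
- by exists b, i.+1; rewrite mulrSr addrA -eq_z subrK.
rewrite leq_eqVlt => /predU1P [-> ->|ij ->]; [right | left]; apply/IH.
  by exists b, j; rewrite mulrSr addrA addrK.
by exists b, i.
Qed.

Lemma sweep_mono B x i j : (i <= j)%N -> sweep B x i \subset sweep B x j.
Proof.
move=> ij; apply/subsetP => z /mem_sweep [b [l [bB li ->]]]; apply/mem_sweep.
by exists b, l; rewrite (leq_trans li).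
Qed.

Lemma card_sweep B x j : x != 0 -> B != set0 -> sweep B x j != setT ->
  (#|B| + j <= #|sweep B x j|)%N.
Proof.
move=> x0 B0; elim: j => [|j IH] jT; first by rewrite addn0.
have j_jS := sweep_mono B x (leqnSn j).
have jT' : sweep B x j != setT by apply: contraNneq jT => jT'; rewrite eqEsubset subsetT -jT'.
rewrite addnS (leq_ltn_trans (IH jT')) // proper_card // properEneq j_jS andbT.
apply: contraNneq jT => eq_j; apply/eqP; rewrite -eq_j; apply: (shift_invariant_setT x0).
  by rewrite {2}eq_j subsetUr.
apply: contraNneq B0 => eq0; rewrite -subset0 -eq0; exact: (sweep_mono _ _ (leq0n j)).
Qed.

Lemma progression_sumset A B : progression A -> (2 <= #|A|)%N -> B != set0 ->
  (#|sumset A B| <= #|A| + #|B| - 1)%N -> (#|sumset A B| < p)%N ->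
  progression (sumset A B).
Proof.
move=> [a [x [k eA]]] A_ge2 B0 le_sum lt_sum.
have leAk : (#|A| <= k)%N by rewrite eA (leq_trans (leq_imset_card _ _)) ?card_ord.
have x0 : x != 0.
  apply: contraTneq A_ge2 => x0; rewrite -ltnNge ltnS -(cards1 a) subset_leq_card //.
  by apply/subsetP => z; rewrite eA x0 => /imsetP [i _ ->]; rewrite mul0rn addr0 set11.
case: k eA leAk => [|[|j]] eA leAk; try by move: (leq_trans A_ge2 leAk).
have eS : sumset A B = shift (sweep B x j.+1) a.
  apply/setP => z; rewrite mem_shift; apply/sumsetP/mem_sweep.
    move=> [y [b [+ bB ->]]]; rewrite eA => /imsetP [i _ ->].
    by exists b, i; rewrite -ltnS ltn_ord addrAC [a + _]addrC addrK addrC.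
  move=> [b [i [bB ij ez]]]; exists (a + x *+ i), b; split=> //.
    by rewrite eA; apply/imsetP; exists (Ordinal (ij : (i < j.+2)%N)).
  by rewrite -(subrK a z) ez addrC [b + _]addrC addrA.
have sT : sweep B x j.+1 != setT by rewrite -card_lt_order -(card_shift _ a) -eS.
have jT : sweep B x j != setT.
  by apply: contraNneq sT => jT; rewrite eqEsubset subsetT -jT sweep_mono.
rewrite eS; apply/progression_shift/progression_setU_shift => //.
  by apply: contraNneq B0 => eq0; rewrite -subset0 -eq0 (sweep_mono _ _ (leq0n j)).
change (#|sweep B x j :|: shift (sweep B x j) x| <= #|sweep B x j|.+1)%N.
have : #|sweep B x j :|: shift (sweep B x j) x| = #|sumset A B| by rewrite eS card_shift.
by have := card_sweep x0 B0 jT; lia.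
Qed.

Lemma sumset_etrans_eq A B e : B :&: shift A (- e) != set0 ->
  (#|sumset A B| <= #|A| + #|B| - 1)%N -> (#|sumset A B| < p)%N ->
  sumset (A :|: shift B e) (B :&: shift A (- e)) = sumset A B.
Proof.
move=> B'0 le_sum lt_sum; have sub := sumset_etrans_sub A B e.
apply/eqP; rewrite eqEcard sub (leq_trans le_sum) // -(card_etrans A B e).
apply: cauchy_davenport_lt => //; last exact: leq_ltn_trans (subset_leq_card sub) lt_sum.
have [c /setIP [cB _]] := set0Pn _ B'0.
by apply/set0Pn; exists (c + e); rewrite inE mem_shift addrK cB orbT.
Qed.

Lemma critical_transporter A B : (2 <= #|B| <= #|A|)%N ->
  (#|sumset A B| <= #|A| + #|B| - 1)%N -> (#|sumset A B| < p)%N ->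
  (forall e, (2 <= #|B :&: shift A (- e)|)%N -> shift B e \subset A) ->
  sumset B (transporter B A) = A /\ (#|transporter B A| + #|B| = #|A| + 1)%N.
Proof.
move=> /andP [B_ge2 leBA] le_sum lt_sum fit; set K := transporter B A.
have [b0 [b1 [b0B b1B b01]]] := card_gt1P B_ge2.
set t := b1 - b0.
have le_AAt : (#|A :|: shift A t| <= #|sumset A B|)%N.
  rewrite -(card_shift _ b0); apply: subset_leq_card; apply/subsetP => z.
  rewrite mem_shift inE mem_shift => /orP [zA|zA].
    by rewrite -(subrK b0 z) mem_sumset.
  by rewrite (_ : z = z - b0 - t + b1) ?mem_sumset // /t opprB addrA subrK subrK.
have le_IK : (#|A :&: shift A t| <= #|K|)%N.
  rewrite -(card_shift _ (- b1)); apply: subset_leq_card; apply/subsetP => e.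
  rewrite mem_shift opprK !inE mem_shift => /andP [e_A e_At]; apply: fit.
  have sub2 : [set b0; b1] \subset B :&: shift A (- e).
    apply/subsetP => z /set2P [->|->]; rewrite inE mem_shift opprK ?b0B ?b1B /=.
      by rewrite (_ : b0 + e = e + b1 - t) // /t opprB addrA addrAC addrK addrC.
    by rewrite addrC.
  by rewrite (leq_trans _ (subset_leq_card sub2)) // cards2 b01.
have le_AIK : (#|A| + 1 <= #|K| + #|B|)%N.
  by move: le_sum le_AAt le_IK (cardsUI A (shift A t)); rewrite card_shift; lia.
have B0 : B != set0 by apply/set0Pn; exists b0.
have K0 : K != set0 by rewrite -card_gt0; lia.
have le_BKA : (#|sumset B K| <= #|A|)%N := subset_leq_card (sumset_transporter_sub B A).
have lt_BK := leq_ltn_trans le_BKA (leq_ltn_trans (leq_card_sumset A b0B) lt_sum).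
have le_BK := cauchy_davenport_lt B0 K0 lt_BK.
split; last by lia.
have le_ABK : (#|A| <= #|sumset B K|)%N by lia.
by apply/eqP; rewrite eqEcard sumset_transporter_sub.
Qed.

Lemma vosper A B : (2 <= #|A|)%N -> (2 <= #|B|)%N ->
  (#|sumset A B| <= #|A| + #|B| - 1)%N -> (#|sumset A B| + 2 <= p)%N ->
  progression (sumset A B).
Proof.
move: {2}#|B| (leqnn #|B|) => n; elim: n A B => [|n IHn] A B leBn.
  by move=> _ B_ge2; lia.
move: {2}#|A| (leqnn #|A|) => m; elim: m A => [|m IHm] A leAm A_ge2 B_ge2 le_sum le_p.
  by lia.
have lt_sum : (#|sumset A B| < p)%N by lia.
have [ltAB|leBA] := ltnP #|A| #|B|.
  by rewrite sumsetC; apply: IHn; rewrite ?(sumsetC B A) //; lia.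
(* An e-transform that shrinks B keeps the sumset and the critical equality; when
   none exists, A = B + K for the transporter K, and we recurse on (K, B). *)
case: (pickP [pred e | 2 <= #|B :&: shift A (- e)| < #|B|]%N) => [e /andP [B'_ge2 ltB'] | fit].
  have B'0 : B :&: shift A (- e) != set0 by rewrite -card_gt0 (ltn_trans _ B'_ge2).
  rewrite -(sumset_etrans_eq B'0 le_sum lt_sum); apply: IHn => //.
  - by lia.
  - by rewrite (leq_trans A_ge2) // subset_leq_card // subsetUl.
  - by rewrite sumset_etrans_eq // card_etrans.
  - by rewrite sumset_etrans_eq.
have {}fit e : (2 <= #|B :&: shift A (- e)|)%N -> shift B e \subset A.
  move=> B'_ge2; have := fit e; rewrite /= B'_ge2 /= => /negbT; rewrite -leqNgt => leB'.
  by rewrite -shift_subsetN; apply/setIidPl/eqP; rewrite eqEcard subsetIl.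
have [eK cK] := critical_transporter (introT andP (conj B_ge2 leBA)) le_sum lt_sum fit.
set K := transporter B A in eK cK.
have B0 : B != set0 by rewrite -card_gt0 (ltn_trans _ B_ge2).
suff prA : progression A by apply: progression_sumset.
have [K_ge2|K_le1] := leqP 2 #|K|.
  rewrite -eK sumsetC; apply: IHm => //; rewrite ?(sumsetC K B) ?eK; try lia.
  by have [b0 b0B] := set0Pn _ B0; have := leq_card_sumset A b0B; lia.
have /cards1P [e0 eK0] : #|K| == 1 by lia.
apply: (progression_of_rigid_translate B_ge2 le_sum fit eK0).
by rewrite -eK eK0 sumset1.
Qed.

Lemma progression_card_predp Y : #|Y| = p.-1 -> progression Y.
Proof.
move=> cY; have p_gt1 := prime_gt1 G_pr.
have [g _ gY] : exists2 g, g \in setT & g \notin Y.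
  by apply/subsetPn; rewrite subTset -card_lt_order cY; lia.
have [x [_ x0]] : exists x : G, x \in setT /\ x != 0.
  have /card_gt1P [a [b [_ _ ab]]] : (1 < #|[set: G]|)%N by rewrite cardsT.
  by have [a0 | a0] := eqVneq a 0; [exists b; rewrite -a0 eq_sym | exists a].
have -> : Y = [set~ g].
  apply/eqP; rewrite eqEcard cardsC1 cY leqnn andbT.
  by apply/subsetP => z zY; rewrite !inE; apply: contraNneq gY => <-.
exists (g + x), x, p.-1; apply/eqP; rewrite eq_sym eqEcard cardsC1.
rewrite card_progression_seg ?leq_pred // leqnn andbT.
apply/subsetP => _ /imsetP [i _ ->]; rewrite !inE -addrA -mulrS.
rewrite -[X in _ != X]addr0 (inj_eq (addrI g)) -(mulr0n x).
have lt_iS : (i.+1 < p)%N by have := ltn_ord i; lia.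
by apply/eqP => /(mulrn_inj x0 lt_iS (leq_ltn_trans (leq0n _) lt_iS)).
Qed.

Lemma progression_critical_sumset A B : (2 <= #|A|)%N -> (2 <= #|B|)%N ->
  (#|sumset A B| <= #|A| + #|B| - 1)%N -> (#|sumset A B| < p)%N ->
  progression (sumset A B).
Proof.
move=> A_ge2 B_ge2 le_sum lt_sum.
have [eq_p1|ne_p1] := eqVneq #|sumset A B| p.-1; first exact: progression_card_predp.
by apply: vosper => //; move: ne_p1 => /eqP; lia.
Qed.

Lemma hall_cond_sum_notin E Y A : (#|E| <= #|Y|)%N -> 0 \notin Y -> A \subset E ->
  hall_cond (sum_notin E) Y A.
Proof.
move=> leEY Y0 AE S SA; have [-> | S0] := eqVneq S set0; first by rewrite cards0.
have SE := subset_trans SA AE.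
have ltYp : (#|Y| < p)%N by rewrite card_lt_order; apply: contraNneq Y0 => ->; rewrite inE.
have := card_nbh_sum_notin SE Y0; have := card_transporter S0 SE (leq_ltn_trans leEY ltYp).
lia.
Qed.

Lemma card_nbh_sum_notin_gt E Y A : ~ progression E -> (#|E| <= #|Y|)%N -> 0 \notin Y ->
  A \subset E -> (2 <= #|A| < #|Y|)%N -> (#|A| < #|nbh (sum_notin E) Y A|)%N.
Proof.
move=> npE leEY Y0 AE /andP [A_ge2 ltAY]; rewrite ltnNge; apply/negP => le_nbh.
set T := transporter A E.
have ltYp : (#|Y| < p)%N by rewrite card_lt_order; apply: contraNneq Y0 => ->; rewrite inE.
have A0 : A != set0 by rewrite -card_gt0 (ltn_trans _ A_ge2).
have sub_AT : sumset A T \subset E := sumset_transporter_sub A E.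
have le_AT := subset_leq_card sub_AT.
have T0 : T != set0 by apply/set0Pn; exists 0; apply: mem0_transporter.
have le_CD := cauchy_davenport_lt A0 T0 (leq_ltn_trans le_AT (leq_ltn_trans leEY ltYp)).
have le_Y : (#|Y| + 1 <= #|nbh (sum_notin E) Y A| + #|T|)%N := card_nbh_sum_notin AE Y0.
have ge_AT : (#|E| <= #|sumset A T|)%N by lia.
have eE : sumset A T = E by apply/eqP; rewrite eqEcard sub_AT.
by apply: npE; rewrite -eE; apply: progression_critical_sumset; rewrite ?eE; lia.
Qed.

End PrimeOrder.

Theorem corollary2p5 (p : nat) (Hp : prime p)
    (EM : {set 'Z_p}) (BM : {set {set 'Z_p}})
    (EN : {set 'Z_p}) (BN : {set {set 'Z_p}}) (n : nat) :
  is_matroid EM BM -> loopless EM BM -> has_rank BM n ->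
  is_matroid EN BN -> loopless EN BN -> has_rank BN n ->
  sparse_paving EN BN n ->
  ((~ progression EM /\ (#|EM|.+1 = #|EN|)%N) \/
   (~ progression EM /\ ~ semi_progression EM /\ #|EM| = #|EN|)) ->
  0 \notin EN ->
  matched EM BM EN BN.
Proof.
move=> [_ sBM _] _ rkM matN loopN rkN spN hcase EN0 A AB.
have AEM := sBM A AB.
have Zp_pr : prime #|'Z_p| by rewrite card_ord Zp_cast ?prime_gt1.
have npEM : ~ progression EM by case: hcase => -[].
have leEMN : (#|EM| <= #|EN|)%N by case: hcase => [[_ <-]|[_ [_ ->]]].
have [f fM] := hall_marriage (hall_cond_sum_notin Zp_pr leEMN EN0 AEM).
have [inj_f fEN _] := fM.
have CEN : f @: A \subset EN by apply/subsetP => _ /imsetP [a aA ->]; apply: fEN.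
have cC : #|f @: A| = n by rewrite card_in_imset // rkM.
have [CB|CnB] := boolP (f @: A \in BN).
  by exists (f @: A) => //; apply: matched_bases_of_matching fM.
have [sub|/subsetPn [y yN yC]] := boolP (nbh (sum_notin EM) EN A \subset f @: A).
  exfalso; have [n_le1|n_gt1] := leqP n 1.
    by rewrite (basis_of_rank_le1 matN rkN loopN n_le1 CEN cC) in CnB.
  have [EN_le|ltnEN] := leqP #|EN| n.
    by rewrite (basis_of_card_ground matN rkN CEN cC EN_le) in CnB.
  have le_nbh : (#|nbh (sum_notin EM) EN A| <= n)%N by rewrite -cC subset_leq_card.
  have := card_nbh_sum_notin_gt Zp_pr npEM leEMN EN0 AEM.
  by rewrite rkM // n_gt1 ltnEN ltnNge le_nbh => /(_ isT).
move: yN; rewrite inE => /andP [yEN /existsP [a0 /andP [a0A Ra0y]]].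
have [g gM eg] := is_matching_update fM a0A (introT setDP (conj yEN yC)) Ra0y.
exists (y |: (f @: A :\ f a0)); last by rewrite -eg; apply: matched_bases_of_matching gM.
by apply: (sparse_paving_exchange matN rkN spN CEN cC); rewrite ?imset_f ?inE ?yEN ?andbT.
Qed.
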